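(* Let $\theta\in[0,1]$ and $\psi=\frac12-\frac{\theta}{4}$. On the cycle graph $C_5$, for $i\in\{1,2\}$ let $P^i_n$ be the probability that the tipsy cop and drunken robber game, started with cop and robber at distance $i$ and the robber moving first, lasts at least $n$ rounds, and let $P_i(t)=\sum_{n=0}^\infty P^i_n t^n$. Then \[ P_1(t)=\frac{1-\frac{\theta t}{4}}{\left(1-\frac{\theta t}{4}\right)(2-\psi t)-1},\qquad P_2(t)=\frac{1}{\left(1-\frac{\theta t}{4}\right)(2-\psi t)-1}. \]
   Context: Tipsy cop and drunken robber game on a graph: a cop and a robber occupy distinct vertices and alternate moves, the robber moving first; on each move the mover must move to an adjacent vertex (no staying put). The robber always moves to a uniformly random neighbor. The cop, independently at each of her moves, with probability $\theta$ moves to a uniformly random neighbor and with probability $1-\theta$ moves to a neighbor that decreases her distance to the robber (onto the robber if adjacent). All random choices are independent; the robber is captured (game over) as soon as both occupy the same vertex. A round consists of one robber move followed by one cop move; ''lasts at least $n$ rounds'' means no capture during the first $2n$ moves, and $P^i_0=1$. *)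

From Stdlib Require Import Reals List Arith Lra.
From Coquelicot Require Import Coquelicot.
Import ListNotations.
Open Scope R_scope.

Record graph := Graph { nbrs : nat -> list nat ; gdist : nat -> nat -> nat }.

(* Uniform average of f over the list l (the uniformly random choice among
   the elements of l). *)
Definition avg (l : list nat) (f : nat -> R) : R :=
  fold_right Rplus 0 (map f l) / INR (length l).

(* The neighbours the cop may use for a greedy move towards the robber at r:
   onto the robber if adjacent, otherwise the neighbours decreasing the
   distance to r (chosen uniformly; on C_5 this is a single vertex). *)
Definition greedy (G : graph) (c r : nat) : list nat :=
  if existsb (Nat.eqb r) (nbrs G c) then [r]
  else filter (fun c' => Nat.ltb (gdist G c' r) (gdist G c r)) (nbrs G c).

(* survive G theta n c r = probability that, with the cop at c and the robber
   at r and the robber to move, no capture occurs during the next n rounds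
   (2n moves). *)
Fixpoint survive (G : graph) (theta : R) (n : nat) (c r : nat) : R :=
  match n with
  | O => 1
  | S m =>
      avg (nbrs G r) (fun r' =>
        if Nat.eqb r' c then 0 else
        let after := fun c' => if Nat.eqb c' r' then 0 else survive G theta m c' r' in
        theta * avg (nbrs G c) after + (1 - theta) * avg (greedy G c r') after)
  end.

Definition C5 : graph :=
  Graph (fun v => [ (v + 1) mod 5 ; (v + 4) mod 5 ])%nat
        (fun u v => let k := ((u + 5 - v) mod 5)%nat in Nat.min k (5 - k)).

(* P^i_n for a start with cop at c and robber at r, gdist C5 c r = i. *)
Definition P_C5 (theta : R) (c r : nat) (n : nat) : R := survive C5 theta n c r.

(* On C_5 every position is, up to symmetry, determined by the distance (1 or 2) between cop and
   robber, so the survival probabilities a_n (distance 1) and b_n (distance 2) obey the linear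
   recurrence a_(n+1) = psi a_n + theta/4 b_n, b_(n+1) = psi a_n + theta/2 b_n with a_0 = b_0 = 1.
   Since 0 <= a_n, b_n <= 1, both generating functions converge for |t| < 1, and the recurrence
   turns into a 2x2 linear system for them whose determinant is the denominator of the formulas. *)

From Stdlib Require Import Reals Lia Lra.
From Coquelicot Require Import Coquelicot.
Open Scope R_scope.

Lemma ex_series_bounded_pow (u : nat -> R) (M t : R) :
  (forall n, Rabs (u n) <= M) -> Rabs t < 1 -> ex_series (fun n => u n * t ^ n).
Proof.
  intros Hu Ht.
  apply (ex_series_le (K := R_AbsRing) (V := R_CompleteNormedModule) _
           (fun n => Rabs t ^ n * M)).
  - intro n. change norm with Rabs.
    rewrite Rabs_mult, <- RPow_abs.
    rewrite Rmult_comm. apply Rmult_le_compat_l; [apply pow_le, Rabs_pos | apply Hu].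
  - exists (/ (1 - Rabs t) * M).
    apply is_series_scal_r, is_series_geom. now rewrite Rabs_Rabsolu.
Qed.

Lemma is_series_pow_succ_lin (u v w : nat -> R) (x y t U V W : R) :
  (forall n, u (S n) = x * v n + y * w n) ->
  is_series (fun n => u n * t ^ n) U ->
  is_series (fun n => v n * t ^ n) V ->
  is_series (fun n => w n * t ^ n) W ->
  U = u O + t * (x * V + y * W).
Proof.
  intros Hrec HU HV HW.
  assert (Htail : is_series (fun n => u (S n) * t ^ S n) (U - u O)).
  { apply (is_series_incr_1 (fun n => u n * t ^ n)).
    replace (plus _ _) with U by (change plus with Rplus; simpl; ring).
    exact HU. }
  assert (Hlin : is_series (fun n => u (S n) * t ^ S n) (t * (x * V) + t * (y * W))).
  { refine (is_series_ext _ _ _ _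
      (is_series_plus (K := R_AbsRing) _ _ _ _
        (is_series_scal (K := R_AbsRing) t _ _ (is_series_scal (K := R_AbsRing) x _ _ HV))
        (is_series_scal (K := R_AbsRing) t _ _ (is_series_scal (K := R_AbsRing) y _ _ HW)))).
    intro n. rewrite Hrec. change scal with Rmult. change plus with Rplus. simpl. ring. }
  apply is_series_unique in Htail. apply is_series_unique in Hlin. lra.
Qed.

Fixpoint C5_survival (theta : R) (n : nat) : R * R :=
  match n with
  | O => (1, 1)
  | S m => let (a, b) := C5_survival theta m in
      ((1/2 - theta/4) * a + theta/4 * b, (1/2 - theta/4) * a + theta/2 * b)
  end.

Definition survival_dist1 (theta : R) (n : nat) : R := fst (C5_survival theta n).
Definition survival_dist2 (theta : R) (n : nat) : R := snd (C5_survival theta n).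

Lemma survival_dist1_S (theta : R) (n : nat) :
  survival_dist1 theta (S n) =
  (1/2 - theta/4) * survival_dist1 theta n + theta/4 * survival_dist2 theta n.
Proof. unfold survival_dist1, survival_dist2; simpl; now destruct (C5_survival theta n). Qed.

Lemma survival_dist2_S (theta : R) (n : nat) :
  survival_dist2 theta (S n) =
  (1/2 - theta/4) * survival_dist1 theta n + theta/2 * survival_dist2 theta n.
Proof. unfold survival_dist1, survival_dist2; simpl; now destruct (C5_survival theta n). Qed.

Lemma survival_dist_unit (theta : R) (n : nat) : 0 <= theta <= 1 ->
  0 <= survival_dist1 theta n <= 1 /\ 0 <= survival_dist2 theta n <= 1.
Proof.
  intro Htheta. induction n as [|n IH].
  - unfold survival_dist1, survival_dist2; simpl; lra.
  - rewrite survival_dist1_S, survival_dist2_S. split; split; nra.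
Qed.

Lemma survive_C5_by_distance (theta : R) (n c r : nat) :
  (c < 5)%nat -> (r < 5)%nat ->
  (gdist C5 c r = 1%nat -> survive C5 theta n c r = survival_dist1 theta n) /\
  (gdist C5 c r = 2%nat -> survive C5 theta n c r = survival_dist2 theta n).
Proof.
  revert c r. induction n as [|n IH]; intros c r Hc Hr.
  - split; reflexivity.
  - rewrite survival_dist1_S, survival_dist2_S.
    (* Unfold one round at each of the 20 positions; every uncaptured successor is again at
       distance 1 or 2, so the induction hypothesis rewrites it. *)
    destruct c as [|[|[|[|[|c]]]]]; try lia;
    destruct r as [|[|[|[|[|r]]]]]; try lia;
    split; intro Hd; try discriminate Hd;
    unfold survive; fold survive; unfold avg, greedy; simpl;
    repeat match goal with
      | |- context [survive C5 theta n ?c' ?r'] =>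
          destruct (IH c' r' ltac:(lia) ltac:(lia)) as [D1 D2];
          first [rewrite (D1 eq_refl) | rewrite (D2 eq_refl)]; clear D1 D2
      end;
    field.
Qed.

Lemma C5_denominator_pos (theta t : R) : 0 <= theta <= 1 -> Rabs t < 1 ->
  0 < (1 - theta * t / 4) * (2 - (1/2 - theta/4) * t) - 1.
Proof.
  intros Htheta Ht. apply Rabs_def2 in Ht as [Ht1 Ht2].
  assert (0 <= theta * (1 - t)) by nra.
  assert (0 <= (1/2 - theta/4) * theta * (t * t)) by (apply Rmult_le_pos; nra).
  nra.
Qed.

Lemma C5_generating_system (theta t A B : R) :
  (1 - theta * t / 4) * (2 - (1/2 - theta/4) * t) - 1 <> 0 ->
  A = 1 + t * ((1/2 - theta/4) * A + theta/4 * B) ->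
  B = 1 + t * ((1/2 - theta/4) * A + theta/2 * B) ->
  A = (1 - theta * t / 4) / ((1 - theta * t / 4) * (2 - (1/2 - theta/4) * t) - 1) /\
  B = 1 / ((1 - theta * t / 4) * (2 - (1/2 - theta/4) * t) - 1).
Proof.
  intros HD HA HB.
  assert (HAB : A = (1 - theta * t / 4) * B) by lra.
  set (D := (1 - theta * t / 4) * (2 - (1/2 - theta/4) * t) - 1) in *.
  assert (HBD : B * D = 1) by (unfold D; rewrite HAB in HB; lra).
  assert (HB' : B = 1 / D)
    by (apply (Rmult_eq_reg_r D); [rewrite HBD; field |]; exact HD).
  split; [rewrite HAB, HB'; field; exact HD | exact HB'].
Qed.

Lemma survival_generating_functions (theta t : R) : 0 <= theta <= 1 -> Rabs t < 1 ->
  is_series (fun n => survival_dist1 theta n * t ^ n)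
    ((1 - theta * t / 4) / ((1 - theta * t / 4) * (2 - (1/2 - theta/4) * t) - 1)) /\
  is_series (fun n => survival_dist2 theta n * t ^ n)
    (1 / ((1 - theta * t / 4) * (2 - (1/2 - theta/4) * t) - 1)).
Proof.
  intros Htheta Ht.
  assert (HA : is_series (fun n => survival_dist1 theta n * t ^ n)
                 (Series (fun n => survival_dist1 theta n * t ^ n))).
  { apply Series_correct, (ex_series_bounded_pow _ 1); [|exact Ht].
    intro n. destruct (survival_dist_unit theta n Htheta). rewrite Rabs_pos_eq; lra. }
  assert (HB : is_series (fun n => survival_dist2 theta n * t ^ n)
                 (Series (fun n => survival_dist2 theta n * t ^ n))).
  { apply Series_correct, (ex_series_bounded_pow _ 1); [|exact Ht].
    intro n. destruct (survival_dist_unit theta n Htheta). rewrite Rabs_pos_eq; lra. }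
  destruct (C5_generating_system theta t
              (Series (fun n => survival_dist1 theta n * t ^ n))
              (Series (fun n => survival_dist2 theta n * t ^ n))) as [EA EB].
  - apply Rgt_not_eq, C5_denominator_pos; assumption.
  - exact (is_series_pow_succ_lin _ _ _ _ _ _ _ _ _ (survival_dist1_S theta) HA HA HB).
  - exact (is_series_pow_succ_lin _ _ _ _ _ _ _ _ _ (survival_dist2_S theta) HB HA HB).
  - rewrite <- EA, <- EB. split; assumption.
Qed.

Theorem mainTheorem9 (theta : R) (Htheta : 0 <= theta <= 1) (c r : nat)
  (Hc : (c < 5)%nat) (Hr : (r < 5)%nat) (t : R) (Ht : Rabs t < 1) :
  (gdist C5 c r = 1%nat ->
     is_series (fun n => P_C5 theta c r n * t ^ n)
       ((1 - theta * t / 4) /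
        ((1 - theta * t / 4) * (2 - (1/2 - theta/4) * t) - 1))) /\
  (gdist C5 c r = 2%nat ->
     is_series (fun n => P_C5 theta c r n * t ^ n)
       (1 / ((1 - theta * t / 4) * (2 - (1/2 - theta/4) * t) - 1))).
Proof.
  destruct (survival_generating_functions theta t Htheta Ht) as [G1 G2].
  split; intro Hd; [eapply is_series_ext, G1 | eapply is_series_ext, G2];
    intro n; unfold P_C5;
    destruct (survive_C5_by_distance theta n c r Hc Hr) as [D1 D2];
    [rewrite (D1 Hd) | rewrite (D2 Hd)]; reflexivity.
Qed.
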